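(* For all integers $2\le k\le n$, \[ \mathbb{P}_n(S_k\cap S_{k-1})=\frac{(n-k+1)^2}{4n(n-1)}, \] i.e. the probability that both the $(k-1)$-th and $k$-th boundary steps of a uniformly random type-B permutation tableau of size $n$ are south steps equals $\frac{(n-k+1)^2}{4n(n-1)}$.
   Context: A Ferrers diagram is a left-justified array of cells whose row lengths weakly decrease from top to bottom (rows of length $0$ are allowed). Its half-perimeter is the number of rows plus the number of columns. Its southeast boundary, traversed from the northeast corner to the southwest corner, consists of $n$ unit steps, each south or west; south steps correspond to rows and west steps to columns. We write $S_k$ (resp. $W_k$) for the event that the $k$-th step is south (resp. west). If the diagram has $c$ columns, the shifted Ferrers diagram is obtained by inserting $c$ new left-justified rows above it, of lengths $c,c-1,\dots,1$ from top to bottom; the rightmost cell of each inserted row is a diagonal cell. A type-B permutation tableau of size $n$ is a filling of a shifted Ferrers diagram of half-perimeter $n$ with $0$'s and $1$'s such that: (1) every column contains at least one $1$; (2) no $0$ has both a $1$ above it in its column and a $1$ to its left in its row; (3) if a diagonal cell contains $0$ then every cell of its row contains $0$. The boundary steps of the shifted diagram are those of the underlying Ferrers diagram. Let $\mathcal{B}_n$ be the set of such tableaux and $\mathbb{P}_n$ the uniform probability measure on $\mathcal{B}_n$. *)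

From mathcomp Require Import all_boot all_order all_algebra.
Set Implicit Arguments. Unset Strict Implicit. Unset Printing Implicit Defensive.

(* A shifted Ferrers diagram of half-perimeter n is encoded by its boundary
   word w : n.-tuple bool, read from the NE corner to the SW corner;
   step p (0-based, p : 'I_n) is South iff w`_p = true, West otherwise.
   South step i  <-> a row of the Ferrers diagram (rows top to bottom in order
                    of i); its cells lie in the columns of the west steps j > i.
   West step j   <-> a column (columns right to left in order of j), and also
                    the inserted row of the shifted part whose diagonal cell is
                    in column j; that row has cells in columns j' >= j.
   Rows are indexed by step positions r : 'I_n; inserted rows (west r) lie
   above all original rows (south r); see aboveB for the vertical order.
   A cell is a pair (r, c) of positions.  Larger column position = further left. *)

Definition stepS n (w : n.-tuple bool) (p : 'I_n) : bool := tnth w p.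

Definition cellB n (w : n.-tuple bool) (r c : 'I_n) : bool :=
  ~~ stepS w c && (if stepS w r then r < c else r <= c)%N.

(* Inserted rows lie above original rows;
   original rows are ordered by position (top = first south step); inserted
   rows are stacked so that each column is contiguous: the inserted row with
   diagonal in the first (rightmost) column is the lowest one and spans all
   columns, the one with diagonal in the last (leftmost) column is the top one. *)
Definition aboveB n (w : n.-tuple bool) (r r' : 'I_n) : bool :=
  [|| ~~ stepS w r && stepS w r',
      [&& stepS w r, stepS w r' & (r < r')%N] |
      [&& ~~ stepS w r, ~~ stepS w r' & (r' < r)%N]].

Definition diagB n (w : n.-tuple bool) (r c : 'I_n) : bool :=
  ~~ stepS w r && (r == c).

(* a candidate tableau: boundary word and a 0/1 filling (entries outside the
   diagram are required to be 0) *)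
Definition tabB n : finType := (n.-tuple bool * {ffun 'I_n * 'I_n -> bool})%type.

Definition is_tabB n (t : tabB n) : bool :=
  let w := t.1 in let f := t.2 in
  [&&
      [forall r, forall c, f (r, c) ==> cellB w r c],
      (* (1) every column contains a 1 *)
      [forall c, ~~ stepS w c ==> [exists r, cellB w r c && f (r, c)]],
      (* (2) no 0 with a 1 above it in its column and a 1 to its left in its row *)
      [forall r, forall c, (cellB w r c && ~~ f (r, c)) ==>
         ~~ ([exists r', [&& cellB w r' c, aboveB w r' r & f (r', c)]] &&
             [exists c', [&& cellB w r c', (c < c')%N & f (r, c')]])] &
      (* (3) a 0 in a diagonal cell forces its whole row to be 0 *)
      [forall r, forall c, (diagB w r c && ~~ f (r, c)) ==>
         [forall c', cellB w r c' ==> ~~ f (r, c')]]].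

Definition BTab n : {set tabB n} := [set t | is_tabB t].

(* event S_k (k-th step, 1-based, is South) *)
Definition S_ev n (k : nat) : {set tabB n} :=
  [set t : tabB n | nth false t.1 k.-1].

Definition PB n (E : {set tabB n}) : rat :=
  (#|E :&: BTab n|%:R / #|BTab n|%:R)%R.

From mathcomp Require Import all_boot all_order all_algebra.
From mathcomp Require Import zify ring.
From Stdlib Require Import FunctionalExtensionality.
Set Implicit Arguments. Unset Strict Implicit. Unset Printing Implicit Defensive.

(* A type-B permutation tableau of size n is built by scanning its boundary
   word w from the first step to the last, filling in each column (west step)
   when it is reached.  After p steps we have a partial tableau: a filling of
   the columns among the first p steps obeying rules (1)-(3).  Its free rows
   are the rows that may still receive a 1 in a column added further left.
   - A south step adds one free row and leaves the fillings unchanged.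
   - A west step adds a nonempty column whose 1's lie in free rows or on the
     new diagonal cell; summing b^(#free rows) over all such columns gives
     2b(b+1)^F - b^(F+1) when F rows were free (sum_free_rows_add_col).
   Hence the weight  Phi_E(p, b) = sum over w in E and partial tableaux f of
   b^(#free rows)  satisfies Phi_E(p+1, b) = b Phi_E(p, b+1) when E is stable
   under flipping step p, and Phi_E(p+1, b) = b Phi_E(p, b) when step p is a
   forced south step.  Iterating from Phi_E(0, b) = #|E| yields
   #B_n = n! 2^n and #(B_n /\ S_k /\ S_(k-1)) = (n-k+1)^2 (n-2)! 2^(n-2),
   whose ratio is the claimed probability. *)

Lemma forall2_inP (A B : finType) (P Q : A -> B -> bool) :
  reflect (forall a b, P a b -> Q a b) [forall a, forall b, P a b ==> Q a b].
Proof.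
apply: (iffP forallP) => [H a b|H a]; first exact: (implyP (forallP (H a) b)).
by apply/forallP => b; apply/implyP/H.
Qed.

Section SubsetSums.
Variable T : finType.
Implicit Types (F Y Z : {set T}).

Lemma sum_subsets_split F m (P : {set T} -> bool) (G : {set T} -> nat) : m \in F ->
  \sum_(Y : {set T} | (Y \subset F) && P Y) G Y =
  \sum_(Z : {set T} | (Z \subset F :\ m) && P (m |: Z)) G (m |: Z) +
  \sum_(Y : {set T} | (Y \subset F :\ m) && P Y) G Y.
Proof.
move=> mF; rewrite (bigID (fun Y : {set T} => m \in Y)) /=; congr (_ + _).
  rewrite (reindex_onto (fun Z => m |: Z) (fun Y => Y :\ m)); last first.
    by move=> Y /andP[_ mY]; rewrite setD1K.
  apply: eq_bigl => Z; rewrite setU11 andbT.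
  case mZ: (m \in Z).
    have -> : ((m |: Z) :\ m == Z) = false.
      by apply/negbTE/eqP => h; move: mZ; rewrite -h setD11.
    by rewrite andbF subsetD1 mZ andbF.
  by rewrite (setU1K (negbT mZ)) eqxx andbT subsetD1 mZ andbT subUset sub1set mF.
apply: eq_bigl => Y; rewrite subsetD1.
by case: (Y \subset F); case: (P Y); case: (m \in Y).
Qed.

Lemma sum_pow_subsets F b : \sum_(Y : {set T} | Y \subset F) b ^ #|Y| = b.+1 ^ #|F|.
Proof.
move: {2}#|F| (erefl #|F|) => N; elim: N F => [|N IH] F hF.
  move: hF => /eqP; rewrite cards_eq0 => /eqP ->.
  by rewrite (big_pred1 set0) ?cards0 // => Y; rewrite subset0.
have /set0Pn [m mF] : F != set0 by rewrite -card_gt0 hF.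
have hF' : #|F :\ m| = N by move: hF; rewrite (cardsD1 m) mF => [[]].
rewrite (eq_bigl (fun Y => (Y \subset F) && true)) => [|Y]; last by rewrite andbT.
rewrite (sum_subsets_split _ _ mF).
under eq_bigl => Y do rewrite andbT.
under [X in _ + X]eq_bigl => Y do rewrite andbT.
rewrite (eq_bigr (fun Z => b * b ^ #|Z|)) => [|Z hZ]; last first.
  have mZ : m \notin Z by apply: contraL hZ => mZ; rewrite subsetD1 mZ andbF.
  by rewrite cardsU1 mZ add1n expnS.
by rewrite -big_distrr /= !IH // hF hF' expnS mulSn addnC.
Qed.

(* The elements of F that lie in Y or are not dominated, for key, by any
   element of Y (the rows that stay free after a column with 1's in Y). *)
Definition unblocked (key : T -> nat) F Y :=
  [set r in F | (r \in Y) || ~~ [exists r', (r' \in Y) && (key r < key r')]].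

Section MinElement.
Variables (key : T -> nat) (F : {set T}) (m : T).
Hypotheses (mF : m \in F) (m_min : forall r, r \in F -> key m <= key r).

Lemma unblocked_add_min Z : unblocked key F (m |: Z) = m |: unblocked key (F :\ m) Z.
Proof.
apply/setP => r; rewrite !inE.
case: (eqVneq r m) => [->|rm] /=; first by rewrite mF.
case rF: (r \in F) => //=; congr (_ || ~~ _).
apply/existsP/existsP => [[r' /andP[]]|[r' /andP[r'Z lt_rr']]].
  rewrite !inE => /orP[/eqP ->|r'Z] lt_rr'; last by exists r'; rewrite r'Z.
  by move: lt_rr'; rewrite ltnNge m_min.
by exists r'; rewrite !inE r'Z orbT.
Qed.

(* The key-minimal element m of F is blocked by any nonempty Y <= F - m. *)
Lemma unblocked_del_min Y : injective key -> Y \subset F :\ m -> Y != set0 ->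
  unblocked key F Y = unblocked key (F :\ m) Y.
Proof.
move=> key_inj YF /set0Pn [y yY]; apply/setP => r; rewrite !inE.
case: (eqVneq r m) => [->|//] /=.
have /setD1P [ym yF] := subsetP YF y yY.
have mY : m \notin Y by apply: contraL YF => mY; rewrite subsetD1 mY andbF.
rewrite mF (negbTE mY) /=; apply/negbF/existsP; exists y.
rewrite yY ltn_neqAle m_min // andbT.
by apply: contra_neq ym => /key_inj.
Qed.
End MinElement.

(* Generating function of the unblocked sets over nonempty Y <= F; the extra
   term b^(|F|+1) is what a south step contributes instead. *)
Lemma sum_pow_unblocked key F b : injective key ->
  \sum_(Y : {set T} | (Y \subset F) && (Y != set0)) b ^ #|unblocked key F Y| + b ^ #|F|.+1
  = b * b.+1 ^ #|F|.
Proof.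
move=> key_inj; move: {2}#|F| (erefl #|F|) => N; elim: N F => [|N IH] F hF.
  move: hF => /eqP; rewrite cards_eq0 => /eqP ->.
  by rewrite big_pred0 ?cards0 ?muln1 // => Y; rewrite subset0; case: (Y == set0).
have /set0Pn [m0 m0F] : F != set0 by rewrite -card_gt0 hF.
pose m := [arg min_(r < m0 in F) key r].
have [mF m_min] : m \in F /\ forall r, r \in F -> key m <= key r.
  by rewrite /m; case: arg_minnP.
have hF' : #|F :\ m| = N by move: hF; rewrite (cardsD1 m) mF => [[]].
rewrite (sum_subsets_split _ _ mF).
rewrite (eq_bigr (fun Z => b * b ^ #|unblocked key (F :\ m) Z|)) => [|Z _]; last first.
  by rewrite unblocked_add_min // cardsU1 !inE eqxx /= add1n expnS.
rewrite -big_distrr /=.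
have mZ0 Z : (m |: Z != set0) = true by apply/set0Pn; exists m; rewrite setU11.
under eq_bigl => Z do rewrite mZ0 andbT.
rewrite (bigD1 set0) ?sub0set //=.
have -> : unblocked key (F :\ m) set0 = F :\ m.
  by apply/setP => r; rewrite !inE; case: existsP => [[r']|_]; rewrite ?inE ?andbT.
rewrite (eq_bigr (fun Y => b ^ #|unblocked key (F :\ m) Y|)
          (P := fun Y => (Y \subset F :\ m) && (Y != set0))) => [|Y /andP[YF Y0]];
  last by rewrite (unblocked_del_min mF m_min).
have := IH _ hF'; rewrite hF hF' !expnS.
set Q := \sum_(i | _) _; set x := b ^ N; set y := b.+1 ^ N => IH'.
nia.
Qed.
End SubsetSums.

Section PartialTableaux.
Variable n : nat.
Notation word := (n.-tuple bool).
Notation fill := {ffun 'I_n * 'I_n -> bool}.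
Implicit Types (w : word) (f g : fill) (X Y Z : {set 'I_n}).

Lemma cellB_le w (r c : 'I_n) : cellB w r c -> r <= c.
Proof. by rewrite /cellB; case: (stepS w r); case: (stepS w c) => //= /ltnW. Qed.

Lemma cellB_west w (r c : 'I_n) : cellB w r c -> stepS w c = false.
Proof. by rewrite /cellB; case: (stepS w c). Qed.

Lemma cellB_col w (r c : 'I_n) : stepS w c = false -> r <= c -> cellB w r c.
Proof.
move=> hc hrc; rewrite /cellB hc /=; case: ifP => // hr.
rewrite ltn_neqAle hrc andbT; apply/negP => /eqP /val_inj e.
by move: hr; rewrite e hc.
Qed.

(* Vertical position of a row: inserted rows above original rows, see aboveB. *)
Definition height w (r : 'I_n) : nat := if stepS w r then n - r else n.+1 + r.

Lemma height_inj w : injective (height w).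
Proof.
move=> r r'; rewrite /height; have := ltn_ord r; have := ltn_ord r'.
by case: (stepS w r); case: (stepS w r') => h1 h2 e; apply: val_inj => /=; lia.
Qed.

Lemma aboveB_height w (r r' : 'I_n) : aboveB w r' r = (height w r < height w r').
Proof.
rewrite /aboveB /height; have := ltn_ord r; have := ltn_ord r'.
by case: (stepS w r); case: (stepS w r') => h1 h2 /=; apply/idP/idP; lia.
Qed.

Definition open_col (p : nat) w (c : 'I_n) := (c < p) && ~~ stepS w c.

Definition one_above w f (r c : 'I_n) :=
  [exists r' : 'I_n, [&& cellB w r' c, aboveB w r' r & f (r', c)]].

Definition one_left (p : nat) w f (r c : 'I_n) :=
  [exists c' : 'I_n, [&& open_col p w c' && cellB w r c', c < c' & f (r, c')]].

Definition tab_support (p : nat) w f :=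
  [forall r : 'I_n, forall c : 'I_n, f (r, c) ==> cellB w r c && open_col p w c].

Definition cols_filled (p : nat) w f :=
  [forall c : 'I_n, open_col p w c ==> [exists r : 'I_n, cellB w r c && f (r, c)]].

Definition no_bad_zero (p : nat) w f :=
  [forall r : 'I_n, forall c : 'I_n, [&& open_col p w c, cellB w r c & ~~ f (r, c)] ==>
     ~~ (one_above w f r c && one_left p w f r c)].

Definition diag_rule (p : nat) w f :=
  [forall r : 'I_n, forall c : 'I_n, [&& open_col p w c, diagB w r c & ~~ f (r, c)] ==>
     [forall c' : 'I_n, open_col p w c' && cellB w r c' ==> ~~ f (r, c')]].

Definition partial_tab (p : nat) w f :=
  [&& tab_support p w f, cols_filled p w f, no_bad_zero p w f & diag_rule p w f].

(* Row r has an open 0 with a 1 above it, so it can get no 1 further left. *)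
Definition blocked (p : nat) w f (r : 'I_n) :=
  [exists c : 'I_n, [&& open_col p w c, cellB w r c, ~~ f (r, c) & one_above w f r c]].

(* Rows that may receive a 1 in a new column placed at a later step: rows
   already seen that are neither zero-diagonal rows nor blocked. *)
Definition free_rows (p : nat) w f : {set 'I_n} :=
  [set r : 'I_n | [&& r < p, ~~ (~~ stepS w r && ~~ f (r, r)) & ~~ blocked p w f r]].

Lemma open_col_lt p w (c : 'I_n) : open_col p w c -> c < p.
Proof. by case/andP. Qed.

Lemma open_col_ne w (p c : 'I_n) : open_col p w c -> c != p.
Proof. by move/open_col_lt; apply: contraTneq => ->; rewrite ltnn. Qed.

Lemma one_left_out p w f (r c : 'I_n) : p <= c -> one_left p w f r c = false.
Proof.
move=> pc; apply/negbTE/existsP => -[c' /and3P[/andP[/open_col_lt c'p _] cc' _]].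
by move: (leq_ltn_trans pc (ltn_trans cc' c'p)); rewrite ltnn.
Qed.

Lemma free_rows_lt p w f (r : 'I_n) : r \in free_rows p w f -> r < p.
Proof. by rewrite inE => /and3P[]. Qed.

Lemma notin_free_rows w f (p : 'I_n) : p \notin free_rows p w f.
Proof. by apply/negP => /free_rows_lt; rewrite ltnn. Qed.

Section Agreement.
Variables (p : nat) (w w' : word).
Hypothesis same_prefix : forall i : 'I_n, i < p -> stepS w i = stepS w' i.

Lemma cellB_agree (r c : 'I_n) : c < p -> cellB w r c = cellB w' r c.
Proof.
move=> hc; rewrite /cellB (same_prefix hc).
case: (leqP r c) => hrc; first by rewrite (same_prefix (leq_ltn_trans hrc hc)).
by rewrite ltnNge (ltnW hrc) /= if_same if_same.
Qed.

Lemma open_col_agree (c : 'I_n) : open_col p w c = open_col p w' c.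
Proof. by rewrite /open_col; case: (ltnP c p) => hc //=; rewrite same_prefix. Qed.

Lemma open_cellB_agree (r c : 'I_n) :
  cellB w r c && open_col p w c = cellB w' r c && open_col p w' c.
Proof.
rewrite open_col_agree; case hc: (open_col p w' c); rewrite ?andbF ?andbT //.
exact/cellB_agree/open_col_lt/hc.
Qed.

Lemma one_above_agree f (r c : 'I_n) : c < p -> r <= c ->
  one_above w f r c = one_above w' f r c.
Proof.
move=> hc hrc; apply: eq_existsb => r'.
rewrite -(cellB_agree r' hc); case hr'c: (cellB w r' c) => //=.
have hr' := leq_ltn_trans (cellB_le hr'c) hc.
by rewrite /aboveB !same_prefix // (leq_ltn_trans hrc hc).
Qed.

Lemma one_left_agree f (r c : 'I_n) : one_left p w f r c = one_left p w' f r c.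
Proof.
by apply: eq_existsb => c'; rewrite !(andbC (open_col _ _ c')) open_cellB_agree.
Qed.

Lemma partial_tab_agree f : partial_tab p w f = partial_tab p w' f.
Proof.
rewrite /partial_tab; congr [&& _, _, _ & _].
- by apply: eq_forallb => r; apply: eq_forallb => c; rewrite open_cellB_agree.
- apply: eq_forallb => c; rewrite open_col_agree.
  case hc: (open_col p w' c) => //=.
  by apply: eq_existsb => r; rewrite cellB_agree ?(open_col_lt hc).
- apply: eq_forallb => r; apply: eq_forallb => c.
  rewrite open_col_agree; case hc: (open_col p w' c) => //=.
  rewrite cellB_agree ?(open_col_lt hc) //; case hrc: (cellB w' r c) => //=.
  by rewrite one_above_agree ?(open_col_lt hc) ?(cellB_le hrc) // one_left_agree.
- apply: eq_forallb => r; apply: eq_forallb => c.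
  rewrite open_col_agree; case hc: (open_col p w' c) => //=.
  rewrite /diagB; case: eqP => [->|_]; rewrite ?andbF //=.
  rewrite same_prefix ?(open_col_lt hc) //; congr (_ ==> _).
  by apply: eq_forallb => c'; rewrite !(andbC (open_col _ _ c')) open_cellB_agree.
Qed.

Lemma free_rows_agree f : free_rows p w f = free_rows p w' f.
Proof.
apply/setP => r; rewrite !inE; case hr: (r < p) => //=.
rewrite same_prefix //; congr (_ && ~~ _); apply: eq_existsb => c.
rewrite open_col_agree; case hc: (open_col p w' c) => //=.
rewrite cellB_agree ?(open_col_lt hc) //; case hrc: (cellB w' r c) => //=.
by rewrite one_above_agree ?(open_col_lt hc) ?(cellB_le hrc).
Qed.
End Agreement.

Section SouthStep.
Variables (w : word) (p : 'I_n).
Hypothesis south : stepS w p.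

Lemma open_col_south : open_col p.+1 w = open_col p w.
Proof.
apply: functional_extensionality => c; rewrite /open_col ltnS leq_eqVlt.
by case: eqP => [/val_inj ->|_]; rewrite ?south ?andbF.
Qed.

Lemma partial_tab_south f : partial_tab p.+1 w f = partial_tab p w f.
Proof.
by rewrite /partial_tab /tab_support /cols_filled /no_bad_zero /diag_rule /one_left
  open_col_south.
Qed.

Lemma free_rows_south f : free_rows p.+1 w f = p |: free_rows p w f.
Proof.
apply/setP => r; rewrite !inE /blocked open_col_south.
case: (eqVneq r p) => [->|rp] /=; last by rewrite ltnS ltn_neqAle val_eqE rp.
rewrite ltnSn south /=; apply/negP => /existsP [c /and4P[hc hpc _ _]].
by move: hpc; rewrite /cellB south => /andP[_ /(ltn_trans (open_col_lt hc))]; rewrite ltnn.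
Qed.

Lemma card_free_rows_south f : #|free_rows p.+1 w f| = #|free_rows p w f|.+1.
Proof. by rewrite free_rows_south cardsU1 notin_free_rows. Qed.
End SouthStep.

Section WestStep.
Variables (w : word) (p : 'I_n).
Hypothesis west : stepS w p = false.

Lemma open_col_west (c : 'I_n) : open_col p.+1 w c = (c == p) || open_col p w c.
Proof.
rewrite /open_col ltnS leq_eqVlt -val_eqE.
by case: eqP => [/val_inj ->|_]; rewrite ?west.
Qed.

Lemma open_col_succ (c : 'I_n) : open_col p w c -> open_col p.+1 w c.
Proof. by rewrite open_col_west => ->; rewrite orbT. Qed.

Lemma open_col_new : open_col p.+1 w p.
Proof. by rewrite open_col_west eqxx. Qed.

Lemma open_col_old (c : 'I_n) : open_col p.+1 w c -> c != p -> open_col p w c.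
Proof. by rewrite open_col_west => /orP[/eqP ->|//]; rewrite eqxx. Qed.

Definition add_col f X : fill :=
  [ffun rc : 'I_n * 'I_n => if rc.2 == p then rc.1 \in X else f rc].

Lemma add_colE f X (r c : 'I_n) :
  add_col f X (r, c) = if c == p then r \in X else f (r, c).
Proof. by rewrite ffunE. Qed.

Lemma add_col_old f X (r c : 'I_n) : c != p -> add_col f X (r, c) = f (r, c).
Proof. by move=> cp; rewrite add_colE (negbTE cp). Qed.

Lemma add_col_new f X (r : 'I_n) : add_col f X (r, p) = (r \in X).
Proof. by rewrite add_colE eqxx. Qed.

Lemma one_above_add_col f X (r c : 'I_n) : c != p ->
  one_above w (add_col f X) r c = one_above w f r c.
Proof. by move=> cp; apply: eq_existsb => r'; rewrite add_col_old. Qed.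

Lemma one_left_add_col f X (r c : 'I_n) :
  one_left p.+1 w (add_col f X) r c =
  one_left p w f r c || [&& c < p, cellB w r p & r \in X].
Proof.
apply/existsP/orP => [[c' /and3P[/andP[hc' hrc'] cc' hg]]|].
  case: (eqVneq c' p) => [ec'|c'p]; last first.
    by left; apply/existsP; exists c'; rewrite open_col_old // hrc' cc' -(add_col_old f X).
  by right; move: hrc' cc' hg; rewrite ec' add_col_new => -> -> ->.
case=> [/existsP [c' /and3P[/andP[hc' hrc'] cc' hf]]|/and3P[cp hrp rX]].
  by exists c'; rewrite open_col_succ // hrc' cc' add_col_old ?(open_col_ne hc').
by exists p; rewrite open_col_new hrp cp add_col_new.
Qed.

Lemma support_col_empty f (r : 'I_n) : tab_support p w f -> f (r, p) = false.
Proof.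
move/forall2_inP/(_ r p); case: (f (r, p)) => // /(_ isT) /andP[_].
by move/open_col_ne; rewrite eqxx.
Qed.

Lemma support_add_col_inv f X : (forall r, f (r, p) = false) ->
  tab_support p.+1 w (add_col f X) -> tab_support p w f.
Proof.
move=> f0 /forall2_inP H; apply/forall2_inP => r c frc.
have cp : c != p by apply: contraTneq frc => ->; rewrite f0.
by have := H r c; rewrite add_col_old // => /(_ frc) /andP[-> /open_col_old ->].
Qed.

Lemma filled_add_col_inv f X : cols_filled p.+1 w (add_col f X) -> cols_filled p w f.
Proof.
move=> /forall_inP H; apply/forall_inP => c hc.
have /existsP [r /andP[hrc]] := H c (open_col_succ hc).
rewrite add_col_old ?(open_col_ne hc) // => frc.
by apply/existsP; exists r; rewrite hrc.
Qed.

Lemma no_bad_zero_add_col_inv f X :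
  no_bad_zero p.+1 w (add_col f X) -> no_bad_zero p w f.
Proof.
move=> /forall2_inP H; apply/forall2_inP => r c /and3P[hc hrc hf].
have cp := open_col_ne hc.
have := H r c; rewrite open_col_succ // hrc add_col_old // hf /= => /(_ isT).
by rewrite one_above_add_col // one_left_add_col; apply: contra => /andP[-> ->].
Qed.

Lemma diag_rule_add_col_inv f X : diag_rule p.+1 w (add_col f X) -> diag_rule p w f.
Proof.
move=> /forall2_inP H; apply/forall2_inP => r c /and3P[hc hd hf].
have := H r c; rewrite open_col_succ // hd add_col_old ?(open_col_ne hc) // hf.
move=> /(_ isT) /forall_inP H'; apply/forall_inP => c' /andP[hc' hrc'].
by have := H' c'; rewrite open_col_succ // hrc' add_col_old ?(open_col_ne hc') //; apply.
Qed.

Lemma add_col_sub_free f X :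
  partial_tab p.+1 w (add_col f X) -> X \subset p |: free_rows p w f.
Proof.
move=> /and4P[/forall2_inP Hs _ /forall2_inP Hz /forall2_inP Hd].
apply/subsetP => r rX; rewrite !inE; case: (eqVneq r p) => [//|rp] /=.
have /andP[hrp _] : cellB w r p && open_col p.+1 w p by apply: Hs; rewrite add_col_new.
have rltp : r < p by rewrite ltn_neqAle val_eqE rp (cellB_le hrp).
rewrite rltp /=; apply/andP; split.
  apply/negP => /andP[hSr hfr].
  have := Hd r r; rewrite /diagB hSr eqxx add_col_old // hfr open_col_succ;
    last by rewrite /open_col rltp hSr.
  move=> /(_ isT) /forall_inP /(_ p).
  by rewrite open_col_new hrp add_col_new rX => /(_ isT).
apply/negP => /existsP [c /and4P[hc hrc hf hA]].
have := Hz r c; rewrite open_col_succ // hrc add_col_old ?(open_col_ne hc) // hf.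
rewrite one_above_add_col ?(open_col_ne hc) // hA one_left_add_col /=.
by rewrite (open_col_lt hc) hrp rX orbT => /(_ isT).
Qed.

Lemma add_col_nonempty f X : cols_filled p.+1 w (add_col f X) -> X != set0.
Proof.
move=> /forall_inP /(_ p open_col_new) /existsP [r /andP[_]].
by rewrite add_col_new => rX; apply/set0Pn; exists r.
Qed.

Section ValidColumn.
Variables (f : fill) (X : {set 'I_n}).
Hypothesis X_free : X \subset p |: free_rows p w f.

Lemma sub_free_cell (r : 'I_n) : r \in X -> cellB w r p.
Proof.
move=> /(subsetP X_free) /setU1P [->|/free_rows_lt rp]; apply: cellB_col => //.
exact: ltnW.
Qed.

Lemma sub_free_rows (r : 'I_n) : r \in X -> r != p -> r \in free_rows p w f.
Proof. by move=> /(subsetP X_free) /setU1P [->|//]; rewrite eqxx. Qed.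

Lemma support_add_col : tab_support p w f -> tab_support p.+1 w (add_col f X).
Proof.
move=> /forall2_inP H; apply/forall2_inP => r c; rewrite add_colE.
case: (eqVneq c p) => [->|cp]; first by move=> rX; rewrite sub_free_cell ?open_col_new.
by move=> /H /andP[-> /open_col_succ].
Qed.

Lemma filled_add_col : X != set0 -> cols_filled p w f -> cols_filled p.+1 w (add_col f X).
Proof.
move=> /set0Pn [r0 r0X] /forall_inP H; apply/forall_inP => c hc.
case: (eqVneq c p) => [->|cp].
  by apply/existsP; exists r0; rewrite sub_free_cell // add_col_new.
have /existsP [r /andP[hrc hf]] := H c (open_col_old hc cp).
by apply/existsP; exists r; rewrite hrc add_col_old.
Qed.

Lemma no_bad_zero_add_col : no_bad_zero p w f -> no_bad_zero p.+1 w (add_col f X).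
Proof.
move=> /forall2_inP H; apply/forall2_inP => r c /and3P[hc hrc].
case: (eqVneq c p) => [->|cp] hg.
  by rewrite one_left_add_col one_left_out // ltnn andbF.
have hc' := open_col_old hc cp.
rewrite add_col_old // in hg; rewrite one_above_add_col // one_left_add_col.
apply/negP => /andP[hA /orP[hL|/and3P[_ _ rX]]].
  by have := H r c; rewrite hc' hrc hg hA hL => /(_ isT).
have rp : r != p by rewrite -val_eqE ltn_eqF // (leq_ltn_trans (cellB_le hrc) (open_col_lt hc')).
have := sub_free_rows rX rp; rewrite inE => /and3P[_ _ /negP]; apply.
by apply/existsP; exists c; rewrite hc' hrc hg hA.
Qed.

Lemma diag_rule_add_col : diag_rule p w f -> diag_rule p.+1 w (add_col f X).
Proof.
move=> /forall2_inP H; apply/forall2_inP => r c /and3P[hc /andP[hSr /eqP erc] hg].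
subst c; apply/forall_inP => c' /andP[hc' hrc']; rewrite add_colE.
case: (eqVneq r p) => [erp|rp].
  subst r; rewrite add_col_new in hg; case: (eqVneq c' p) => // c'p.
  by have := leq_ltn_trans (cellB_le hrc') (open_col_lt (open_col_old hc' c'p)); rewrite ltnn.
rewrite add_col_old // in hg; case: (eqVneq c' p) => [_|c'p].
  apply/negP => rX; have := sub_free_rows rX rp.
  by rewrite inE hSr hg => /and3P[].
have := H r r; rewrite open_col_old // /diagB hSr eqxx hg => /(_ isT) /forall_inP; apply.
by rewrite open_col_old.
Qed.
End ValidColumn.

Lemma partial_tab_add_col f X : (forall r, f (r, p) = false) ->
  partial_tab p.+1 w (add_col f X) =
  [&& partial_tab p w f, X \subset p |: free_rows p w f & X != set0].
Proof.
move=> f0; apply/idP/idP => [Hg|/and3P[/and4P[Hs Hc Hz Hd] HX Hne]].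
  move: (Hg) => /and4P[Hs Hc Hz Hd].
  rewrite /partial_tab (support_add_col_inv f0 Hs) (filled_add_col_inv Hc).
  by rewrite (no_bad_zero_add_col_inv Hz) (diag_rule_add_col_inv Hd)
    (add_col_sub_free Hg) (add_col_nonempty Hc).
by rewrite /partial_tab support_add_col ?filled_add_col ?no_bad_zero_add_col
  ?diag_rule_add_col.
Qed.

Lemma aboveB_new (r : 'I_n) : r < p -> aboveB w p r.
Proof. by move=> rp; rewrite /aboveB west /=; case: (stepS w r); rewrite //= rp. Qed.

Lemma blocked_add_col f X (r : 'I_n) : X \subset p |: free_rows p w f -> r < p ->
  blocked p.+1 w (add_col f X) r =
  blocked p w f r || (r \notin X) && [exists r', (r' \in X) && aboveB w r' r].
Proof.
move=> X_free rp; apply/existsP/orP.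
  move=> [c /and4P[hc hrc hg hA]]; case: (eqVneq c p) => [ecp|cp].
    subst c; rewrite add_col_new in hg; right; rewrite hg /=.
    move: hA => /existsP [r' /and3P[_ hab]]; rewrite add_col_new => r'X.
    by apply/existsP; exists r'; rewrite r'X hab.
  left; apply/existsP; exists c.
  by rewrite open_col_old // hrc -(add_col_old f X r cp) hg -(one_above_add_col f X r cp).
move=> [/existsP [c /and4P[hc hrc hf hA]]|/andP[rX /existsP [r' /andP[r'X hab]]]].
  have cp := open_col_ne hc.
  by exists c; rewrite open_col_succ // hrc add_col_old // hf one_above_add_col.
exists p; rewrite open_col_new cellB_col ?(ltnW rp) // add_col_new rX /=.
by apply/existsP; exists r'; rewrite (sub_free_cell X_free) // hab add_col_new.
Qed.

Lemma free_rows_add_col f X : X \subset p |: free_rows p w f ->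
  free_rows p.+1 w (add_col f X) =
  [set r | (r == p) && (p \in X)] :|:
  [set r in free_rows p w f | (r \in X) || ~~ [exists r', (r' \in X) && aboveB w r' r]].
Proof.
move=> X_free; apply/setP => r; rewrite in_setU !in_set.
case: (eqVneq r p) => [->|rp] /=.
  rewrite ltnSn west add_col_new ltnn /= orbF.
  case pX: (p \in X) => //=; apply/negP => /existsP [c /and4P[hc hpc hg _]].
  have ecp : c = p.
    by apply/val_inj/eqP; rewrite eqn_leq (cellB_le hpc) -ltnS (open_col_lt hc).
  by move: hg; rewrite ecp add_col_new pX.
have rp' : (nat_of_ord r == p) = false by apply/negbTE.
rewrite ltnS leq_eqVlt rp' /=; case rlt: (r < p) => //=.
rewrite blocked_add_col // add_col_old //.
by case: (blocked p w f r); case: (r \in X); case: [exists r', _]; rewrite /= ?andbF ?andbT.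
Qed.

Lemma free_rows_add_new f Z : Z \subset free_rows p w f ->
  free_rows p.+1 w (add_col f (p |: Z)) = p |: Z.
Proof.
move=> Z_free; rewrite free_rows_add_col ?setUS //.
have F_lt := @free_rows_lt p w f; have pF := notin_free_rows w f p.
move: F_lt pF Z_free; set F := free_rows p w f; clearbody F => F_lt pF Z_free.
apply/setP => r; rewrite !inE eqxx andbT.
case: (eqVneq r p) => [->|rp] /=; first by [].
case rZ: (r \in Z); first by rewrite /= (subsetP Z_free).
case rF: (r \in F) => //=; apply/negbF/existsP; exists p.
by rewrite !inE eqxx aboveB_new ?F_lt.
Qed.

Lemma free_rows_add_old f Y : Y \subset free_rows p w f ->
  free_rows p.+1 w (add_col f Y) = unblocked (height w) (free_rows p w f) Y.
Proof.
move=> Y_free; have pY : p \notin Y by apply: contraNN (notin_free_rows w f p); apply/subsetP.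
rewrite free_rows_add_col ?(subset_trans Y_free) ?subsetUr //.
apply/setP => r; rewrite /unblocked !inE (negbTE pY) andbF /=.
by congr (_ && (_ || ~~ _)); apply: eq_existsb => r'; rewrite aboveB_height.
Qed.

Lemma sum_free_rows_add_col f b :
  \sum_(X : {set 'I_n} | (X \subset p |: free_rows p w f) && (X != set0))
     b ^ #|free_rows p.+1 w (add_col f X)| + b ^ #|free_rows p w f|.+1
  = 2 * b * b.+1 ^ #|free_rows p w f|.
Proof.
set F := free_rows p w f; have pF : p \notin F := notin_free_rows w f p.
rewrite (sum_subsets_split _ _ (setU11 p F)) (setU1K pF).
rewrite (eq_bigr (fun Z => b * b ^ #|Z|)) => [|Z /andP[ZF _]]; last first.
  have pZ : p \notin Z by apply: contraNN pF; apply/subsetP.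
  by rewrite free_rows_add_new // cardsU1 pZ add1n expnS.
have pZ0 Z : (p |: Z != set0) = true by apply/set0Pn; exists p; rewrite setU11.
under eq_bigl => Z do rewrite pZ0 andbT.
rewrite -big_distrr /= sum_pow_subsets.
rewrite (eq_bigr (fun Y => b ^ #|unblocked (height w) F Y|)) => [|Y /andP[YF _]];
  last by rewrite free_rows_add_old.
rewrite -addnA sum_pow_unblocked; last exact: height_inj.
by rewrite -mulnA mul2n -addnn.
Qed.

Definition drop_col g : fill := [ffun rc : 'I_n * 'I_n => g rc && (rc.2 != p)].

Definition new_col g : {set 'I_n} := [set r | g (r, p)].

Lemma add_drop_col g : add_col (drop_col g) (new_col g) = g.
Proof.
apply/ffunP => -[r c]; rewrite add_colE ffunE /=.
by case: (eqVneq c p) => [->|_]; rewrite ?inE ?andbT.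
Qed.

Lemma new_col_add f X : new_col (add_col f X) = X.
Proof. by apply/setP => r; rewrite inE add_col_new. Qed.

Lemma drop_col_add f X : (forall r, f (r, p) = false) -> drop_col (add_col f X) = f.
Proof.
move=> f0; apply/ffunP => -[r c]; rewrite ffunE add_colE /=.
by case: (eqVneq c p) => [->|_]; rewrite ?f0 ?andbT ?andbF.
Qed.

Lemma drop_col_empty g (r : 'I_n) : drop_col g (r, p) = false.
Proof. by rewrite ffunE /= eqxx andbF. Qed.

Lemma sum_west_step b :
  \sum_(g | partial_tab p.+1 w g) b ^ #|free_rows p.+1 w g| +
  \sum_(f | partial_tab p w f) b ^ #|free_rows p w f|.+1 =
  \sum_(f | partial_tab p w f) 2 * b * b.+1 ^ #|free_rows p w f|.
Proof.
rewrite (reindex_onto (fun j : fill * {set 'I_n} => add_col j.1 j.2)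
  (fun g => (drop_col g, new_col g))) => [|g _]; last exact: add_drop_col.
rewrite (eq_bigl (fun j : fill * {set 'I_n} =>
  partial_tab p w j.1 && ((j.2 \subset p |: free_rows p w j.1) && (j.2 != set0))))
  => [|[f X] /=]; last first.
  rewrite new_col_add xpair_eqE eqxx andbT.
  have [f0|] := boolP [forall r, f (r, p) == false].
    have f0' r : f (r, p) = false by apply/eqP; move/forallP: f0.
    by rewrite partial_tab_add_col // drop_col_add // eqxx andbT.
  move=> f0; have -> /= : partial_tab p w f = false.
    by apply: contraNF f0 => /and4P[Hs _ _ _]; apply/forallP => r; rewrite support_col_empty.
  apply: contraNF f0 => /andP[_ /eqP <-].
  by apply/forallP => r; rewrite drop_col_empty.
rewrite -(pair_big_dep (fun f => partial_tab p w f)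
  (fun f X => (X \subset p |: free_rows p w f) && (X != set0))
  (fun f X => b ^ #|free_rows p.+1 w (add_col f X)|)) /=.
by rewrite -big_split; apply: eq_bigr => f _; exact: sum_free_rows_add_col.
Qed.
End WestStep.

Definition weight (E : {set word}) (p b : nat) : nat :=
  \sum_(w in E) \sum_(f | partial_tab p w f) b ^ #|free_rows p w f|.

Definition flip (q : 'I_n) w : word :=
  [tuple if i == q then ~~ tnth w i else tnth w i | i < n].

Lemma stepS_flip (q i : 'I_n) w :
  stepS (flip q w) i = if i == q then ~~ stepS w i else stepS w i.
Proof. by rewrite /stepS /flip tnth_mktuple. Qed.

Lemma flipK (q : 'I_n) : involutive (flip q).
Proof.
move=> w; apply: eq_from_tnth => i; rewrite -/(stepS _ i) !stepS_flip.
by case: (i == q); rewrite ?negbK.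
Qed.

Definition flip_closed (E : {set word}) (q : 'I_n) := forall w, (flip q w \in E) = (w \in E).

Lemma sum_flip (E : {set word}) (q : 'I_n) (K : word -> nat) : flip_closed E q ->
  \sum_(w in E) K w = \sum_(w in E | stepS w q) (K w + K (flip q w)).
Proof.
move=> E_closed; rewrite big_split /= (bigID (fun w => stepS w q)) /=; congr (_ + _).
rewrite (reindex_inj (can_inj (flipK q))) /=; apply: eq_bigl => w.
by rewrite E_closed stepS_flip eqxx negbK.
Qed.

Lemma flip_same_prefix (q : 'I_n) w (i : 'I_n) : i < q -> stepS w i = stepS (flip q w) i.
Proof. by move=> iq; rewrite stepS_flip -val_eqE (ltn_eqF iq). Qed.

Lemma weight_flip (E : {set word}) (q : 'I_n) b : flip_closed E q ->
  weight E q.+1 b = b * weight E q b.+1.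
Proof.
move=> E_closed; rewrite /weight !(sum_flip _ E_closed) big_distrr /=.
apply: eq_bigr => w /andP[_ south].
have west : stepS (flip q w) q = false by rewrite stepS_flip eqxx south.
have same := @flip_same_prefix q w.
rewrite -!(eq_bigl _ _ (partial_tab_agree same)).
under [X in _ = b * (_ + X)]eq_bigr => f _ do rewrite -(free_rows_agree same).
rewrite (eq_bigl _ _ (partial_tab_south south)).
under eq_bigr => f _ do rewrite card_free_rows_south //.
have := sum_west_step west b.
rewrite -!(eq_bigl _ _ (partial_tab_agree same)).
under [X in _ + X = _]eq_bigr => f _ do rewrite -(free_rows_agree same).
under [X in _ = X]eq_bigr => f _ do rewrite -(free_rows_agree same).
rewrite addnC => ->; rewrite -big_split /= big_distrr /=; apply: eq_bigr => f _.
by rewrite -mulnA mul2n -addnn mulnDr.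
Qed.

Lemma weight_south (E : {set word}) (q : 'I_n) b : (forall w, w \in E -> stepS w q) ->
  weight E q.+1 b = b * weight E q b.
Proof.
move=> E_south; rewrite /weight big_distrr; apply: eq_bigr => w wE.
rewrite (eq_bigl _ _ (partial_tab_south (E_south w wE))) big_distrr.
by apply: eq_bigr => f _; rewrite card_free_rows_south ?E_south // expnS.
Qed.

Lemma weight0 (E : {set word}) b : weight E 0 b = #|E|.
Proof.
rewrite -sum1_card /weight; apply: eq_bigr => w _.
rewrite (big_pred1 [ffun => false]).
  suff -> : free_rows 0 w [ffun => false] = set0 by rewrite cards0.
  by apply/setP => r; rewrite !inE.
move=> f; apply/idP/eqP => [/and4P[/forall2_inP supp _ _ _]|->].
  apply/ffunP => -[r c]; rewrite ffunE; apply/negP => /supp.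
  by rewrite /open_col ltn0 andbF.
by apply/and4P; split; apply/forallP => r; rewrite ?ffunE //; apply/forallP => c;
  rewrite ffunE.
Qed.

Lemma partial_tab_full w f : partial_tab n w f = is_tabB (w, f).
Proof.
have open_cell r c : cellB w r c && open_col n w c = cellB w r c.
  by rewrite /open_col ltn_ord /=; case h: (cellB w r c); rewrite //= (cellB_west h).
have open_cell' r c : open_col n w c && cellB w r c = cellB w r c.
  by rewrite andbC open_cell.
rewrite /partial_tab /is_tabB /=; congr [&& _, _, _ & _].
- by apply: eq_forallb => r; apply: eq_forallb => c; rewrite open_cell.
- by apply: eq_forallb => c; rewrite /open_col ltn_ord.
- apply: eq_forallb => r; apply: eq_forallb => c.
  rewrite andbA open_cell'; congr (_ ==> ~~ (_ && _)).
  by apply: eq_existsb => c'; rewrite open_cell'.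
- apply: eq_forallb => r; apply: eq_forallb => c.
  case hd: (diagB w r c); rewrite ?andbF //=.
  have wc : ~~ stepS w c by move: hd; rewrite /diagB => /andP[h /eqP <-].
  rewrite /open_col ltn_ord wc /=; congr (_ ==> _); apply: eq_forallb => c'.
  by rewrite -/(open_col n w c') open_cell'.
Qed.

Lemma weight_full (E : {set word}) :
  #|[set t : tabB n | (t.1 \in E) && is_tabB t]| = weight E n 1.
Proof.
rewrite -sum1_card /weight.
rewrite (eq_bigr (fun w => \sum_(f | partial_tab n w f) 1)) => [|w _]; last first.
  by apply: eq_bigr => f _; rewrite exp1n.
rewrite pair_big_dep /=; apply: eq_bigl => -[w f] /=.
by rewrite inE partial_tab_full.
Qed.

Lemma weight_flips (E : {set word}) p m b : p + m <= n ->
  (forall q : 'I_n, p <= q < p + m -> flip_closed E q) ->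
  weight E (p + m) b = (\prod_(i < m) (b + i)) * weight E p (b + m).
Proof.
elim: m b => [|m IH] b pm_n E_closed; first by rewrite !addn0 big_ord0 mul1n.
have q_lt : p + m < n by rewrite -addnS.
rewrite addnS (weight_flip (q := Ordinal q_lt) b); last first.
  by apply: E_closed; rewrite /= leq_addr addnS ltnSn.
rewrite (IH b.+1 (ltnW q_lt)) => [|q /andP[pq qpm]]; last first.
  by apply: E_closed; rewrite pq addnS ltnS ltnW.
rewrite big_ord_recl /= addn0 mulnA addSnnS; congr (_ * _ * _).
by apply: eq_bigr => i _; rewrite addSnnS.
Qed.

Lemma card_flip_half (E : {set word}) (q : 'I_n) : flip_closed E q ->
  #|E| = 2 * #|[set w in E | stepS w q]|.
Proof.
move=> E_closed; rewrite -!sum1_card (sum_flip (fun _ => 1) E_closed) big_distrr /=.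
by apply: eq_bigl => w; rewrite !inE.
Qed.
End PartialTableaux.

Lemma fact_chain a m : a`! * \prod_(i < m) (a.+1 + i) = (a + m)`!.
Proof.
elim: m => [|m IH]; first by rewrite big_ord0 muln1 addn0.
by rewrite big_ord_recr /= mulnA IH addnS factS mulnC addSn.
Qed.

Lemma card_BTab n : #|BTab n| = n`! * 2 ^ n.
Proof.
have -> : BTab n = [set t : tabB n | (t.1 \in [set: n.-tuple bool]) && is_tabB t].
  by apply/setP => t; rewrite !inE.
have all_closed (q : 'I_n) : flip_closed setT q by move=> w; rewrite !inE.
have := @weight_flips n setT 0 n 1 (leqnn n) (fun q _ => all_closed q).
rewrite weight_full !add0n => ->.
by rewrite weight0 cardsT card_tuple card_bool -(fact_chain 0 n) fact0 mul1n.
Qed.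

Section SouthPair.
Variables (n : nat) (a b : 'I_n).
Hypothesis a_neq_b : a != b.

Definition south_pair : {set n.-tuple bool} := [set w | stepS w a && stepS w b].

Lemma south_pair_closed (q : 'I_n) : q != a -> q != b -> flip_closed south_pair q.
Proof. by move=> qa qb w; rewrite !inE !stepS_flip eq_sym (negbTE qa) eq_sym (negbTE qb). Qed.

Lemma card_south_pair : 4 * #|south_pair| = 2 ^ n.
Proof.
have -> : south_pair = [set w in [set w in setT | stepS w a] | stepS w b].
  by apply/setP => w; rewrite !inE.
rewrite -[4]/(2 * 2) -mulnA -(card_flip_half (q := b)) => [|w]; last first.
  by rewrite !inE stepS_flip (negbTE a_neq_b).
rewrite -(card_flip_half (q := a)) => [|w]; last by rewrite !inE.
by rewrite cardsT card_tuple card_bool.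
Qed.
End SouthPair.

(* The number of tableaux whose steps k-1 and k are south: steps after k are
   free, steps k-1 and k are forced, steps before k-1 are free again. *)
Lemma card_two_south n k : 2 <= k -> k <= n ->
  #|(S_ev n k :&: S_ev n k.-1) :&: BTab n| = (n - k).+1 ^ 2 * (n - 2)`! * 2 ^ (n - 2).
Proof.
move=> k2 kn; have a_lt : k.-1 < n by lia.
have b_lt : k.-2 < n by lia.
pose a := Ordinal a_lt; pose b := Ordinal b_lt.
have ab : a != b by rewrite -val_eqE /=; lia.
set E := south_pair a b; set j := (n - k).+1.
have E_closed (q : 'I_n) : (q < k.-2) || (k <= q) -> flip_closed E q.
  by move=> hq; apply: south_pair_closed; rewrite -val_eqE /=; lia.
have -> : (S_ev n k :&: S_ev n k.-1) :&: BTab n = [set t : tabB n | (t.1 \in E) && is_tabB t].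
  by apply/setP => t; rewrite !inE /stepS !(tnth_nth false) andbA.
have high : weight E n 1 = (n - k)`! * weight E k j.
  have := @weight_flips n E k (n - k) 1; rewrite subnKC // add1n => -> //.
    by rewrite -(fact_chain 0 (n - k)) fact0 mul1n.
  by move=> q /andP[kq _]; apply: E_closed; rewrite kq orbT.
have pair : weight E k j = j * (j * weight E k.-2 j).
  have -> : k = a.+1 by rewrite /= prednK //; lia.
  rewrite weight_south => [|w]; last by rewrite inE => /andP[].
  have -> : nat_of_ord a = b.+1 by rewrite /=; lia.
  by rewrite weight_south // => w; rewrite inE => /andP[].
have low : weight E k.-2 j = (\prod_(i < k.-2) (j + i)) * #|E|.
  have := @weight_flips n E 0 k.-2 j; rewrite !add0n weight0 => -> //; first lia.
  by move=> q /andP[_ qk]; apply: E_closed; rewrite qk.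
have cardE : #|E| = 2 ^ (n - 2).
  have := card_south_pair ab; rewrite -[n in 2 ^ n](@subnK 2 n) ?(leq_trans k2) //.
  by rewrite expnD -/E mulnC => /eqP; rewrite eqn_pmul2r // => /eqP.
have <- : (n - k)`! * \prod_(i < k.-2) (j + i) = (n - 2)`!.
  by rewrite fact_chain; congr _`!; lia.
by rewrite weight_full high pair low cardE; ring.
Qed.

Import GRing.Theory Num.Theory.

Theorem mainTheorem8 (n k : nat) :
  (2 <= k)%N -> (k <= n)%N ->
  PB (S_ev n k :&: S_ev n k.-1) =
    (((n - k + 1) ^ 2)%:R / (4 * n * (n - 1))%:R)%R.
Proof.
move=> k2 kn; rewrite /PB card_two_south // card_BTab.
have n_eq : n = (n - 2).+2 by lia.
have fact_n : n`! = n * (n - 1) * (n - 2)`!.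
  by rewrite {1}n_eq !factS -n_eq mulnA; congr (_ * _ * _); lia.
have pow_n : 2 ^ n = 4 * 2 ^ (n - 2) by rewrite {1}n_eq !expnS mulnA.
have num_neq0 : ((n`! * 2 ^ n)%:R != 0 :> rat)%R.
  by rewrite pnatr_eq0 muln_eq0 negb_or -!lt0n fact_gt0 expn_gt0.
have den_neq0 : ((4 * n * (n - 1))%:R != 0 :> rat)%R.
  by rewrite pnatr_eq0 !muln_eq0; apply/negP; lia.
apply/eqP; rewrite eqr_div // -!natrM eqr_nat fact_n pow_n addn1; apply/eqP; ring.
Qed.
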